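(* Let $n\geq 1$, let $\alpha,\beta,d\in\mathbb{Z}$ with $1\leq d\leq n$, and consider the complete graph $K_n$ with an initial configuration $c_0$ in which $d$ of the vertices receive $\alpha$ chips and the remaining $n-d$ vertices receive $\beta$ chips. Then this configuration is tight, i.e. there exists $t\geq 0$ with $c_{t+2}=c_t$.
   Context: Diffusion process: for a finite simple graph $G$ and a chip configuration $c_t:V(G)\to\mathbb{Z}$ (negative values allowed), the next configuration is defined simultaneously for every vertex $u$ by $c_{t+1}(u)=c_t(u)-|\{w\in N(u): c_t(u)>c_t(w)\}|+|\{w\in N(u): c_t(u)<c_t(w)\}|$. A graph with initial configuration is tight if the process is eventually fixed or eventually periodic with period length $2$, equivalently $c_{t+2}=c_t$ for some $t\geq0$. *)

From mathcomp Require Import all_boot all_order all_algebra.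
Set Implicit Arguments. Unset Strict Implicit. Unset Printing Implicit Defensive.
Import Order.TTheory GRing.Theory Num.Theory.
Local Open Scope ring_scope.

Definition simple_graph (T : finType) (e : rel T) : Prop :=
  symmetric e /\ irreflexive e.

Definition diffuse_step (T : finType) (e : rel T) (c : T -> int) : T -> int :=
  fun u => c u - (#|[set w | e u w && (c w < c u)]|)%:Z
               + (#|[set w | e u w && (c u < c w)]|)%:Z.

Definition diffuse (T : finType) (e : rel T) (c0 : T -> int) (t : nat) : T -> int :=
  iter t (diffuse_step e) c0.

Definition tight (T : finType) (e : rel T) (c0 : T -> int) : Prop :=
  exists t : nat, diffuse e c0 t.+2 = diffuse e c0 t.

Definition complete_rel (n : nat) : rel 'I_n := fun x y => x != y.

(* On the complete graph a configuration taking the value a on D and b off D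
   stays of this form: while a > b, every vertex of D loses one chip to each of
   the |~: D| vertices off D and each vertex off D gains |D| chips, so the gap
   a - b drops by n = |D| + |~: D|.  Once 0 < a - b < n, one step makes the
   gap a - b - n < 0, and the next step moves both values back by the same
   amounts: the process is 2-periodic from then on. *)
From mathcomp Require Import all_boot all_order all_algebra.
From mathcomp Require Import zify.
From Stdlib Require Import FunctionalExtensionality.
Set Implicit Arguments.
Unset Strict Implicit.
Unset Printing Implicit Defensive.

Import Order.TTheory GRing.Theory Num.Theory.
Local Open Scope ring_scope.

(* [p] holds the values on D and off D; [m] = |~: D| and [d] = |D| are the
   numbers of neighbours each side has on the other side. *)
Definition pair_step (m d : nat) (p : int * int) : int * int :=
  if p.2 < p.1 then (p.1 - m%:Z, p.2 + d%:Z)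
  else if p.1 < p.2 then (p.1 + m%:Z, p.2 - d%:Z) else p.

Section PairStep.
Variables (m d : nat).
Hypothesis md_gt0 : (0 < m + d)%N.

Lemma pair_step_close_periodic (p : int * int) :
  (`|p.1 - p.2| < m + d)%N -> iter 2 (pair_step m d) p = p.
Proof.
case: p => a b /= close; rewrite /pair_step /=.
case: (ltgtP b a) => [ba | ab | ->]; rewrite /= ?ltxx //.
- have -> : (b + d%:Z < a - m%:Z) = false by apply/negbTE; lia.
  have -> : (a - m%:Z < b + d%:Z) = true by lia.
  by congr pair; lia.
- have -> : (b - d%:Z < a + m%:Z) = true by lia.
  by congr pair; lia.
Qed.

Lemma pair_step_far_gap (p : int * int) :
  (m + d <= `|p.1 - p.2|)%N ->
  (`|(pair_step m d p).1 - (pair_step m d p).2| < `|p.1 - p.2|)%N.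
Proof.
case: p => a b /= far; rewrite /pair_step /=.
case: (ltgtP b a) => [ba | ab | eq_ab] /=; lia.
Qed.

Lemma pair_step_eventually_periodic (p : int * int) :
  exists t, iter t.+2 (pair_step m d) p = iter t (pair_step m d) p.
Proof.
have [k] := ubnP `|p.1 - p.2|%N; elim: k p => // k IH p gap_lt.
have [close | far] := ltnP `|p.1 - p.2|%N (m + d).
  by exists 0%N; apply: pair_step_close_periodic.
have [|t periodic] := IH (pair_step m d p).
  exact: leq_trans (pair_step_far_gap far) (ltnSE gap_lt).
by exists t.+1; rewrite [LHS]iterSr [RHS]iterSr.
Qed.

End PairStep.

Section CompleteGraph.
Variables (n : nat) (D : {set 'I_n}).

Definition two_valued (p : int * int) : 'I_n -> int :=
  fun x => if x \in D then p.1 else p.2.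

Lemma two_valued_neighbours (r : rel int) (r_irr : irreflexive r)
    (p : int * int) (u : 'I_n) :
  [set w | complete_rel u w && r (two_valued p w) (two_valued p u)] =
  if u \in D then (if r p.2 p.1 then ~: D else set0)
  else (if r p.1 p.2 then D else set0).
Proof.
apply/setP => w; rewrite /two_valued /complete_rel !inE.
case uD: (u \in D); case wD: (w \in D); rewrite ?r_irr ?andbF;
  try by case: ifP; rewrite ?inE ?wD.
all: have -> : u != w by apply/eqP => uw; rewrite uw wD in uD.
all: by case: ifP; rewrite ?inE ?wD.
Qed.

Lemma diffuse_step_two_valued (p : int * int) :
  diffuse_step (@complete_rel n) (two_valued p) =
  two_valued (pair_step #|~: D| #|D| p).
Proof.
apply: functional_extensionality => u; rewrite /diffuse_step.
rewrite (two_valued_neighbours ltxx) (@two_valued_neighbours >%R ltxx).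
rewrite /two_valued /pair_step /=.
by case: (u \in D); case: ltgtP => _ /=; rewrite ?cards0 ?addr0 ?subr0.
Qed.

Lemma diffuse_two_valued (p : int * int) (t : nat) :
  diffuse (@complete_rel n) (two_valued p) t =
  two_valued (iter t (pair_step #|~: D| #|D|) p).
Proof.
elim: t => [//|t IH].
by rewrite /diffuse iterS -/(diffuse _ _ t) IH diffuse_step_two_valued.
Qed.

End CompleteGraph.

Theorem theorem17 (n : nat) (alpha beta : int) (d : nat) (D : {set 'I_n}) :
  (1 <= n)%N -> (1 <= d)%N -> (d <= n)%N -> #|D| = d ->
  tight (@complete_rel n) (fun x => if x \in D then alpha else beta).
Proof.
move=> _ d_gt0 _ card_D.
have md_gt0 : (0 < #|~: D| + #|D|)%N by rewrite card_D addn_gt0 d_gt0 orbT.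
have [t periodic] := pair_step_eventually_periodic md_gt0 (alpha, beta).
exists t; rewrite -/(two_valued D (alpha, beta)).
by rewrite !diffuse_two_valued periodic.
Qed.
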